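(* A pointed $(n+d,d)$-matching field is linkage if and only if its reduction is an $(n,d)$-matching left-semi-ensemble. Consequently, reduction is a bijection between linkage pointed $(n+d,d)$-matching fields and $(n,d)$-matching left-semi-ensembles.
   Context: Let $n,d$ be positive integers, $[\bar d]=\{\bar1,\dots,\bar d\}$, and $[\underline d]=\{\underline1,\dots,\underline d\}$ a further copy of $[d]$. A pointed $(n+d,d)$-matching field assigns to every $d$-element subset $\sigma\subseteq[n]\sqcup[\underline d]$ a bijection $M_\sigma:\sigma\to[\bar d]$ such that $M_\sigma(\underline j)=\bar j$ whenever $\underline j\in\sigma$; each $M_\sigma$ is viewed as a perfect matching graph between $\sigma$ and $[\bar d]$. It is linkage if for every $(d+1)$-element subset $\tau\subseteq[n]\sqcup[\underline d]$, the union of the graphs $M_\sigma$ over all $d$-subsets $\sigma\subset\tau$ is a spanning tree on $\tau\sqcup[\bar d]$ in which every vertex of $[\bar d]$ has degree $2$. An $(n,d)$-matching stack is a collection of bijections (partial matchings) $M_{I,\bar J}$ between $I$ and $\bar J$, one for each pair $I\subseteq[n]$, $\bar J\subseteq[\bar d]$ with $|I|=|\bar J|$, viewed as subgraphs of the complete bipartite graph on $[n]\sqcup[\bar d]$. It is a matching left-semi-ensemble if (Closure) whenever $I'\subseteq I$, $\bar J'\subseteq\bar J$ and $M_{I,\bar J}$ contains a perfect matching between $I'$ and $\bar J'$, then $M_{I',\bar J'}\subseteq M_{I,\bar J}$; and (Left linkage) for all $I,\bar J$ with $|I|=|\bar J|+1$, the union of $M_{I',\bar J}$ over all $I'\subset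 I$ with $|I'|=|\bar J|$ is a spanning tree on $I\sqcup\bar J$ in which every vertex of $\bar J$ has degree $2$. The reduction of a pointed matching field is the matching stack defined by: for each $d$-subset $\sigma$, let $\bar\sigma=\{\bar j:\underline j\in\sigma\}$; then $M_{\sigma\cap[n],\,[\bar d]\setminus\bar\sigma}$ is the restriction of $M_\sigma$ to $\sigma\cap[n]$. (This is a bijection between pointed matching fields and matching stacks.) *)

From mathcomp Require Import all_boot.
Set Implicit Arguments. Unset Strict Implicit. Unset Printing Implicit Defensive.

Section Bip.
Variables U V : finType.

Definition is_pmatching (A : {set U}) (B : {set V}) (E : {set U * V}) : Prop :=
  E \subset setX A B /\
  (forall a, a \in A -> #|[set b | (a, b) \in E]| = 1) /\
  (forall b, b \in B -> #|[set a | (a, b) \in E]| = 1).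

Definition badj (E : {set U * V}) : rel (U + V) := fun x y =>
  match x, y with
  | inl u, inr v => (u, v) \in E
  | inr v, inl u => (u, v) \in E
  | _, _ => false
  end.

Definition bverts (A : {set U}) (B : {set V}) : {set U + V} :=
  [set (inl a : U + V) | a in A] :|: [set (inr b : U + V) | b in B].

Definition bacyclic (E : {set U * V}) : Prop :=
  ~ exists s : seq (U + V), [&& 2 < size s, uniq s & cycle (badj E) s].

Definition is_spanning_tree (A : {set U}) (B : {set V}) (E : {set U * V}) : Prop :=
  E \subset setX A B /\
  (forall x y, x \in bverts A B -> y \in bverts A B -> connect (badj E) x y) /\
  bacyclic E.

Definition right_deg2 (B : {set V}) (E : {set U * V}) : Prop :=
  forall b, b \in B -> #|[set a | (a, b) \in E]| = 2.
End Bip.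

(** * Pointed (n+d,d)-matching fields.
    Ground set [n] ⊔ [underline d] is ['I_n + 'I_d]; [bar d] is ['I_d]. *)
Definition gset (n d : nat) := ('I_n + 'I_d)%type.
Definition fidx (n d : nat) := {s : {set gset n d} | #|s| == d}.
Definition mfield (n d : nat) := {ffun fidx n d -> {set gset n d * 'I_d}}.

Definition fget n d (M : mfield n d) (s : {set gset n d}) : {set gset n d * 'I_d} :=
  match @insub _ (fun s : {set gset n d} => #|s| == d) (fidx n d) s with
  | Some k => M k | None => set0 end.

Definition is_pointed_mf n d (M : mfield n d) : Prop :=
  forall k : fidx n d,
    is_pmatching (val k) [set: 'I_d] (M k) /\
    (forall j : 'I_d, (inr j : gset n d) \in val k -> (inr j : gset n d, j) \in M k).

Definition is_linkage n d (M : mfield n d) : Prop :=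
  forall tau : {set gset n d}, #|tau| = d.+1 ->
    let G := \bigcup_(s : {set gset n d} | (s \subset tau) && (#|s| == d)) fget M s in
    is_spanning_tree tau [set: 'I_d] G /\ right_deg2 [set: 'I_d] G.

Definition sidx (n d : nat) := {p : {set 'I_n} * {set 'I_d} | #|p.1| == #|p.2|}.
Definition mstack (n d : nat) := {ffun sidx n d -> {set 'I_n * 'I_d}}.

Definition sget n d (S : mstack n d) (I : {set 'I_n}) (J : {set 'I_d}) : {set 'I_n * 'I_d} :=
  match @insub _ (fun p : {set 'I_n} * {set 'I_d} => #|p.1| == #|p.2|) (sidx n d) (I, J) with
  | Some k => S k | None => set0 end.

Definition is_mstack n d (S : mstack n d) : Prop :=
  forall k : sidx n d, is_pmatching (val k).1 (val k).2 (S k).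

Definition closure_ax n d (S : mstack n d) : Prop :=
  forall (I I' : {set 'I_n}) (J J' : {set 'I_d}),
    #|I| = #|J| -> I' \subset I -> J' \subset J ->
    (exists E : {set 'I_n * 'I_d}, E \subset sget S I J /\ is_pmatching I' J' E) ->
    sget S I' J' \subset sget S I J.

Definition left_linkage_ax n d (S : mstack n d) : Prop :=
  forall (I : {set 'I_n}) (J : {set 'I_d}), #|I| = #|J| + 1 ->
    let G := \bigcup_(I' : {set 'I_n} | (I' \subset I) && (#|I'| == #|J|)) sget S I' J in
    is_spanning_tree I J G /\ right_deg2 J G.

Definition is_left_semi_ensemble n d (S : mstack n d) : Prop :=
  is_mstack S /\ closure_ax S /\ left_linkage_ax S.

(** * Reduction: M_{σ∩[n], [bar d]∖bar σ} := restriction of M_σ to σ∩[n].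
    For the stack index (I,J), σ = I ⊔ underline([d] ∖ J). *)
Definition red_sigma n d (I : {set 'I_n}) (J : {set 'I_d}) : {set gset n d} :=
  [set (inl i : gset n d) | i in I] :|: [set (inr j : gset n d) | j in ~: J].

Definition reduction n d (M : mfield n d) : mstack n d :=
  [ffun k : sidx n d =>
     [set e : 'I_n * 'I_d | (inl e.1 : gset n d, e.2) \in fget M (red_sigma (val k).1 (val k).2)]].

(* Fix tau of size d + 1 and let I = tau ∩ [n], J = [d] ∖ bar(tau), so |I| = |J| + 1
   and tau is the reduction index of (I, J).  The linkage graph at tau, i.e. the union of
   the M_sigma with sigma ⊂ tau, is its core on I ⊔ bar(J) together with, for each
   underline k in tau, a pendant path  underline k -- bar k -- i_k.  Pendant paths change
   neither being a tree nor the degrees in bar(J), so linkage at tau says that the core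
   is a tree with bar(J) of degree 2.  The core contains the left-linkage graph at (I, J)
   (the matchings at (I ∖ i, J)), and equals it under the degree condition and also
   under closure: an extra core edge lies in the matching at (I, J ∪ {k}), which by
   closure contains the matching at (I ∖ c, J) for the partner c of k.  Conversely,
   linkage implies closure, and closure follows from single-edge deletions: the
   matching at (I ∖ i, J ∖ j) and the matching at (I, J) minus (i, j) are perfect
   matchings of the same vertex sets inside a forest, so they coincide.  Finally,
   pointedness fixes M_sigma away from [n], so reduction is injective, and any stack is
   the reduction of the evident pointed field. *)

From mathcomp Require Import all_boot zify.
Set Implicit Arguments. Unset Strict Implicit. Unset Printing Implicit Defensive.

(** * Perfect matchings and forests *)

Section PerfectMatching.
Variables U V : finType.
Implicit Types (A : {set U}) (B : {set V}) (E : {set U * V}).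

Lemma pmatching_mem A B E a b :
  is_pmatching A B E -> (a, b) \in E -> (a \in A) && (b \in B).
Proof. by case=> /subsetP sE _ /sE; rewrite in_setX. Qed.

Lemma pmatching_uniqL A B E a b b' :
  is_pmatching A B E -> (a, b) \in E -> (a, b') \in E -> b = b'.
Proof.
move=> pm ab ab'; have /andP[aA _] := pmatching_mem pm ab.
case: pm => _ [/(_ a aA)/eq_leq/card_le1_eqP uniq_b _].
by apply: uniq_b; rewrite inE.
Qed.

Lemma pmatching_uniqR A B E a a' b :
  is_pmatching A B E -> (a, b) \in E -> (a', b) \in E -> a = a'.
Proof.
move=> pm ab a'b; have /andP[_ bB] := pmatching_mem pm ab.
case: pm => _ [_ /(_ b bB)/eq_leq/card_le1_eqP uniq_a].
by apply: uniq_a; rewrite inE.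
Qed.

Lemma pmatching_exL A B E a : is_pmatching A B E -> a \in A -> exists b, (a, b) \in E.
Proof.
case=> _ [cardL _] aA.
have /card_gt0P[b] : 0 < #|[set b | (a, b) \in E]| by rewrite cardL.
by rewrite inE; exists b.
Qed.

Lemma pmatching_exR A B E b : is_pmatching A B E -> b \in B -> exists a, (a, b) \in E.
Proof.
case=> _ [_ cardR] bB.
have /card_gt0P[a] : 0 < #|[set a | (a, b) \in E]| by rewrite cardR.
by rewrite inE; exists a.
Qed.

Lemma pmatching_setD1 A B E a b :
  is_pmatching A B E -> (a, b) \in E -> is_pmatching (A :\ a) (B :\ b) (E :\ (a, b)).
Proof.
move=> pm ab; have [_ [cardL cardR]] := pm; split; [|split].
- apply/subsetP => -[x y]; rewrite !inE => /andP[xy_ab xy].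
  case/andP: (pmatching_mem pm xy) => -> ->; rewrite !andbT.
  apply/andP; split; apply: contraNneq xy_ab => /= eq_xy; subst.
    by rewrite (pmatching_uniqL pm xy ab).
  by rewrite (pmatching_uniqR pm xy ab).
- move=> x /setD1P[xa xA]; rewrite -(cardL _ xA); apply: eq_card => y.
  by rewrite !inE xpair_eqE (negbTE xa).
- move=> y /setD1P[yb yB]; rewrite -(cardR _ yB); apply: eq_card => x.
  by rewrite !inE xpair_eqE (negbTE yb) andbF.
Qed.

Lemma pmatching_sub_eq A A' B B' E F :
  is_pmatching A B F -> is_pmatching A' B' E -> E \subset F ->
  A \subset A' -> B' \subset B -> A = A' /\ B = B'.
Proof.
move=> pmF pmE /subsetP EF AA' B'B; split; apply/eqP; rewrite eqEsubset ?AA' ?B'B ?andbT.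
  apply/subsetP => a aA'; have [b eb] := pmatching_exL pmE aA'.
  by case/andP: (pmatching_mem pmF (EF _ eb)).
apply/subsetP => b bB; have [a ea] := pmatching_exR pmF bB.
have /andP[aA _] := pmatching_mem pmF ea; have [b' eb'] := pmatching_exL pmE (subsetP AA' _ aA).
by rewrite (pmatching_uniqL pmF ea (EF _ eb')); case/andP: (pmatching_mem pmE eb').
Qed.

Lemma pmatching_sub_restrict A A' B B' E F F' :
  is_pmatching A B F -> is_pmatching A' B' F' -> F' \subset F -> E \subset F ->
  (forall a b, (a, b) \in E -> a \in A') -> E \subset F'.
Proof.
move=> pmF pmF' /subsetP F'F /subsetP EF EA'; apply/subsetP => -[a b] eab.
have [b' eab'] := pmatching_exL pmF' (EA' _ _ eab).
by rewrite (pmatching_uniqL pmF (EF _ eab) (F'F _ eab')).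
Qed.

End PerfectMatching.

Lemma card_setD1_eq (T : finType) (A : {set T}) x m : x \in A -> #|A| = m.+1 -> #|A :\ x| = m.
Proof. by move=> xA; rewrite (cardsD1 x A) xA add1n => -[]. Qed.

Lemma subset_card_setD1 (T : finType) (A B : {set T}) m :
  B \subset A -> #|A| = m.+1 -> #|B| = m -> exists2 x, x \in A & B = A :\ x.
Proof.
move=> BA cA cB; have /card_gt0P[x] : 0 < #|A :\: B|.
  by rewrite cardsD (setIidPr BA) cA cB subSnn.
case/setDP=> xA xB; exists x => //; apply/eqP; rewrite eqEcard.
apply/andP; split; last by rewrite (card_setD1_eq xA cA) cB.
by apply/subsetP => y yB; rewrite !inE (subsetP BA _ yB) andbT; apply: contraNneq xB => <-.
Qed.

Section BipartiteGraph.
Variables U V : finType.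
Implicit Types (A : {set U}) (B : {set V}) (E : {set U * V}).

Lemma badj_sym E : symmetric (badj E).
Proof. by case=> [u|v] [u'|v']. Qed.

Lemma mem_bvertsL A B a : ((inl a : U + V) \in bverts A B) = (a \in A).
Proof.
rewrite /bverts in_setU mem_imset; last by move=> ? ? [->].
have /negbTE-> : (inl a : U + V) \notin inr @: B by apply/imsetP; case.
exact: orbF.
Qed.

Lemma mem_bvertsR A B b : ((inr b : U + V) \in bverts A B) = (b \in B).
Proof.
rewrite /bverts in_setU mem_imset; last by move=> ? ? [->].
have /negbTE-> : (inr b : U + V) \notin inl @: A by apply/imsetP; case.
by [].
Qed.

End BipartiteGraph.

Lemma connect_map (T T' : finType) (e : rel T) (e' : rel T') (f : T -> T') :
  (forall x y, e x y -> connect e' (f x) (f y)) ->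
  forall x y, connect e x y -> connect e' (f x) (f y).
Proof.
move=> fe x y /connectP[p + ->]; elim: p x => [|z p IHp] x /= => [_|]; first exact: connect0.
by case/andP=> /fe exz /IHp; apply: connect_trans.
Qed.

Lemma uniq_cycle_nbrs (T : eqType) (e : rel T) s x :
  cycle e s -> uniq s -> 2 < size s -> x \in s ->
  exists y w, [/\ y \in s, w \in s, y != w, e x y & e w x].
Proof.
move=> cs us ss /rot_to[i s' rot_s].
have cs' : cycle e (x :: s') by rewrite -rot_s rot_cycle.
have us' : uniq (x :: s') by rewrite -rot_s rot_uniq.
have ss' : 2 < size (x :: s') by rewrite -rot_s size_rot.
have mem z : z \in x :: s' -> z \in s by rewrite -rot_s mem_rot.
case: s' {rot_s} cs' us' ss' mem => [|y [|z m]] //= cs' us' _ mem.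
rewrite rcons_path /= in cs'; case/and4P: cs' => exy _ _ ewx.
exists y, (last z m); split => //.
- exact/mem/mem_behead/mem_head.
- exact/mem/mem_behead/mem_behead/mem_last.
- by case/and4P: us' => _ ynzm _ _; apply: contraNneq ynzm => ->; apply: mem_last.
Qed.

Section AlternatingWalk.
Variables (U V : finType) (A : {set U}) (B : {set V}) (a0 : U) (b0 : V).
Implicit Types E : {set U * V}.

Definition mateL E a := odflt b0 [pick b | (a, b) \in E].
Definition mateR E b := odflt a0 [pick a | (a, b) \in E].

Lemma mateLP E a : is_pmatching A B E -> a \in A -> (a, mateL E a) \in E.
Proof.
move=> pm aA; rewrite /mateL; case: pickP => [//|noE].
by have [b] := pmatching_exL pm aA; rewrite noE.
Qed.

Lemma mateRP E b : is_pmatching A B E -> b \in B -> (mateR E b, b) \in E.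
Proof.
move=> pm bB; rewrite /mateR; case: pickP => [//|noE].
by have [a] := pmatching_exR pm bB; rewrite noE.
Qed.

Definition alternate E1 E2 (x : U + V) : U + V :=
  match x with
  | inl a => if a \in A then inr (mateL E1 a) else x
  | inr b => if b \in B then inl (mateR E2 b) else x
  end.

Variables E1 E2 : {set U * V}.
Hypotheses (pm1 : is_pmatching A B E1) (pm2 : is_pmatching A B E2).

Lemma alternateK : cancel (alternate E1 E2) (alternate E2 E1).
Proof.
case=> [a|b] /=.
  case: ifP => [aA|aA] /=; last by rewrite aA.
  have e1 := mateLP pm1 aA.
  have /andP[_ bB] := pmatching_mem pm1 e1.
  by rewrite bB (pmatching_uniqR pm1 (mateRP pm1 bB) e1).
case: ifP => [bB|bB] /=; last by rewrite bB.
have e2 := mateRP pm2 bB.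
have /andP[aA _] := pmatching_mem pm2 e2.
by rewrite aA (pmatching_uniqL pm2 (mateLP pm2 aA) e2).
Qed.

Lemma alternate_bverts x : x \in bverts A B -> alternate E1 E2 x \in bverts A B.
Proof.
case: x => [a|b]; rewrite ?mem_bvertsL ?mem_bvertsR => /= xAB; rewrite xAB.
  by rewrite mem_bvertsR; case/andP: (pmatching_mem pm1 (mateLP pm1 xAB)).
by rewrite mem_bvertsL; case/andP: (pmatching_mem pm2 (mateRP pm2 xAB)).
Qed.

Lemma alternate_edge (G : {set U * V}) x : E1 \subset G -> E2 \subset G ->
  x \in bverts A B -> badj G x (alternate E1 E2 x).
Proof.
move=> /subsetP sub1 /subsetP sub2.
case: x => [a|b]; rewrite ?mem_bvertsL ?mem_bvertsR => /= xAB; rewrite xAB /=.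
  exact/sub1/mateLP.
exact/sub2/mateRP.
Qed.

End AlternatingWalk.

(* An edge of [E1] missing from [E2] lies on the cycle traced by alternately
   following [E1] and [E2]. *)
Lemma acyclic_pmatching_sub (U V : finType) (A : {set U}) (B : {set V}) (G E1 E2 : {set U * V}) :
  bacyclic G -> E1 \subset G -> E2 \subset G ->
  is_pmatching A B E1 -> is_pmatching A B E2 -> E1 \subset E2.
Proof.
move=> acyG sub1 sub2 pm1 pm2; apply/subsetP => -[a0 b0] e1; apply: contraT => ne2.
pose f := alternate A B a0 b0 E1 E2.
have f_inj : injective f := can_inj (alternateK a0 b0 pm1 pm2).
have a0A : a0 \in A by case/andP: (pmatching_mem pm1 e1).
have orbit_bverts : all [in bverts A B] (orbit f (inl a0)).
  apply/allP => y; rewrite /orbit => /trajectP[k _ ->] /=.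
  elim: k => [|k IHk]; first by rewrite mem_bvertsL.
  exact: alternate_bverts.
have mate_a0 : mateL b0 E1 a0 = b0 := pmatching_uniqL pm1 (mateLP b0 pm1 a0A) e1.
have orbit_gt2 : 2 < size (orbit f (inl a0)).
  rewrite size_orbit; case def_o: (order f (inl a0)) => [|[|[|k]]] //.
  - by have := order_gt0 f (inl a0); rewrite def_o.
  - by have := iter_order f_inj (inl a0); rewrite def_o /= a0A.
  have b0B : b0 \in B by case/andP: (pmatching_mem pm1 e1).
  have := iter_order f_inj (inl a0); rewrite def_o /= a0A mate_a0 /= b0B => -[mate_b0].
  by move: (mateRP a0 pm2 b0B); rewrite mate_b0 (negbTE ne2).
exfalso; apply: acyG; exists (orbit f (inl a0)); rewrite orbit_gt2 orbit_uniq /=.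
apply: sub_in_cycle orbit_bverts (cycle_orbit f_inj _) => x y xAB _ /eqP <-.
exact: alternate_edge.
Qed.

Lemma acyclic_pmatching_uniq (U V : finType) (A : {set U}) (B : {set V}) (G E1 E2 : {set U * V}) :
  bacyclic G -> E1 \subset G -> E2 \subset G ->
  is_pmatching A B E1 -> is_pmatching A B E2 -> E1 = E2.
Proof.
move=> acyG sub1 sub2 pm1 pm2; apply/eqP; rewrite eqEsubset.
rewrite (acyclic_pmatching_sub acyG sub1 sub2 pm1 pm2).
exact: acyclic_pmatching_sub acyG sub2 sub1 pm2 pm1.
Qed.

(** * Pointed matching fields and their reductions *)

Section GroundSet.
Variables n d : nat.
Implicit Types (s : {set gset n d}) (I : {set 'I_n}) (J : {set 'I_d}).

Definition idxI s : {set 'I_n} := [set i | inl i \in s].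
Definition idxJ s : {set 'I_d} := [set k | inr k \notin s].

Lemma red_sigmaE I J : red_sigma I J = bverts I (~: J).
Proof. by []. Qed.

Lemma red_sigma_inl I J i : (inl i \in red_sigma I J) = (i \in I).
Proof. by rewrite red_sigmaE mem_bvertsL. Qed.

Lemma red_sigma_inr I J k : (inr k \in red_sigma I J) = (k \notin J).
Proof. by rewrite red_sigmaE mem_bvertsR inE. Qed.

Lemma red_sigmaK s : red_sigma (idxI s) (idxJ s) = s.
Proof. by apply/setP => -[i|k]; rewrite ?red_sigma_inl ?red_sigma_inr !inE ?negbK. Qed.

Lemma idxI_red_sigma I J : idxI (red_sigma I J) = I.
Proof. by apply/setP => i; rewrite inE red_sigma_inl. Qed.

Lemma idxJ_red_sigma I J : idxJ (red_sigma I J) = J.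
Proof. by apply/setP => k; rewrite inE red_sigma_inr negbK. Qed.

Lemma red_sigma_setD1_inl I J i : i \in I -> red_sigma I J :\ inl i = red_sigma (I :\ i) J.
Proof.
by move=> iI; apply/setP => -[i'|k]; rewrite in_setD1 ?red_sigma_inl ?red_sigma_inr ?inE.
Qed.

Lemma red_sigma_setD1_inr I J k : k \notin J -> red_sigma I J :\ inr k = red_sigma I (k |: J).
Proof.
move=> kJ; apply/setP => -[i|k']; rewrite in_setD1 ?red_sigma_inl ?red_sigma_inr //.
by rewrite !inE negb_or.
Qed.

Lemma card_red_sigma I J : #|red_sigma I J| + #|J| = #|I| + d.
Proof.
have disjIJ : [set inl i | i in I] :&: [set inr k | k in ~: J] = set0 :> {set gset n d}.
  by apply/setP => x; rewrite !inE; apply/andP => -[/imsetP[? _ ->] /imsetP[]].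
have := cardsUI (T := gset n d) [set inl i | i in I] [set inr k | k in ~: J].
rewrite disjIJ cards0 addn0 !card_imset => [-> | ? ? [] // | ? ? [] //].
by rewrite -addnA [#|~: J| + _]addnC cardsC card_ord.
Qed.

Lemma card_red_sigma_eq I J m : #|I| = #|J| + m -> #|red_sigma I J| = d + m.
Proof. by have := card_red_sigma I J; lia. Qed.

Lemma card_idx s m : #|s| = d + m -> #|idxI s| = #|idxJ s| + m.
Proof. by have := card_red_sigma (idxI s) (idxJ s); rewrite red_sigmaK; lia. Qed.

End GroundSet.

Lemma fgetE n d (M : mfield n d) (s : {set gset n d}) (cs : #|s| == d) :
  fget M s = M (exist _ s cs).
Proof. by rewrite /fget insubT. Qed.

Lemma sgetE n d (S : mstack n d) (I : {set 'I_n}) (J : {set 'I_d}) (cIJ : #|I| == #|J|) :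
  sget S I J = S (exist _ (I, J) cIJ).
Proof. by rewrite /sget insubT. Qed.

Lemma sget_pmatching n d (S : mstack n d) (I : {set 'I_n}) (J : {set 'I_d}) :
  is_mstack S -> #|I| = #|J| -> is_pmatching I J (sget S I J).
Proof. by move=> mS /eqP cIJ; rewrite (sgetE S cIJ); apply: (mS (exist _ (I, J) cIJ)). Qed.

Section PointedField.
Variables (n d : nat) (M : mfield n d).
Hypothesis pM : is_pointed_mf M.
Implicit Types (s : {set gset n d}) (I : {set 'I_n}) (J : {set 'I_d}).

Lemma fget_pmatching s : #|s| = d -> is_pmatching s [set: 'I_d] (fget M s).
Proof. by move=> /eqP cs; rewrite (fgetE M cs); case: (pM (exist _ s cs)). Qed.

Lemma fget_inrE s k j : #|s| = d -> ((inr k, j) \in fget M s) = (inr k \in s) && (j == k).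
Proof.
move=> /eqP cs; have [pm diag] := pM (exist _ s cs); rewrite (fgetE M cs).
apply/idP/andP => [e | [ks /eqP->]]; last exact: diag.
have /andP[ks _] := pmatching_mem pm e.
by split=> //; rewrite (pmatching_uniqL pm e (diag k ks)).
Qed.

Lemma fget_inl s i j : #|s| = d -> (inl i, j) \in fget M s -> inr j \notin s.
Proof.
move=> cs e; apply/negP => js.
have jj : (inr j, j) \in fget M s by rewrite fget_inrE // js eqxx.
by have := pmatching_uniqR (fget_pmatching cs) e jj.
Qed.

Lemma sget_reductionE I J i j : #|I| = #|J| ->
  ((i, j) \in sget (reduction M) I J) = ((inl i, j) \in fget M (red_sigma I J)).
Proof. by move=> /eqP cIJ; rewrite (sgetE _ cIJ) ffunE inE. Qed.

Lemma reduction_pmatching I J : #|I| = #|J| -> is_pmatching I J (sget (reduction M) I J).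
Proof.
move=> cIJ; have cs : #|red_sigma I J| = d by rewrite (card_red_sigma_eq (m := 0)) ?addn0.
have [sub [degL degR]] := fget_pmatching cs; split; [|split].
- apply/subsetP => -[i j]; rewrite sget_reductionE // => e; rewrite in_setX /=.
  have /andP[+ _] := pmatching_mem (fget_pmatching cs) e.
  by have := fget_inl cs e; rewrite red_sigma_inl red_sigma_inr negbK => -> ->.
- move=> i iI; rewrite -(degL (inl i)) ?red_sigma_inl //.
  by apply: eq_card => j; rewrite !inE sget_reductionE.
- move=> j jJ; rewrite -(degR j) ?inE // -(card_imset _ (@inl_inj _ 'I_d)).
  apply: eq_card => -[i|k]; rewrite !inE.
    by rewrite mem_imset ?inE ?sget_reductionE //; apply: inl_inj.
  rewrite fget_inrE // red_sigma_inr; apply/imsetP/andP => [[] // | [kJ /eqP jk]].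
  by rewrite -jk jJ in kJ.
Qed.

Lemma reduction_mstack : is_mstack (reduction M).
Proof. by move=> [[I J] /= cIJ]; rewrite -(sgetE _ cIJ); apply/reduction_pmatching/eqP. Qed.

End PointedField.

(** * Pendant paths *)

Definition core_graph n d (J : {set 'I_d}) (G : {set gset n d * 'I_d}) : {set 'I_n * 'I_d} :=
  [set e | ((inl e.1, e.2) \in G) && (e.2 \in J)].

Section PendantPaths.
Variables (n d : nat) (I : {set 'I_n}) (J : {set 'I_d}).
Variables (G : {set gset n d * 'I_d}) (mate : 'I_d -> 'I_n).
(* Outside [J], [G] consists of the pendant paths [inr k -- k -- inl (mate k)]. *)
Hypotheses (G_notinJ : forall k, k \notin J ->
                forall x, ((x, k) \in G) = (x == inr k) || (x == inl (mate k)))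
  (mate_mem : forall k, k \notin J -> mate k \in I)
  (G_inr : forall k j, (inr k, j) \in G -> (j == k) && (k \notin J)).

Local Notation tau := (red_sigma I J).
Local Notation core := (core_graph J G).

Definition lift_vertex (x : 'I_n + 'I_d) : gset n d + 'I_d :=
  match x with inl i => inl (inl i) | inr j => inr j end.

Definition retract_vertex (z : gset n d + 'I_d) : 'I_n + 'I_d :=
  match z with
  | inl (inl i) => inl i
  | inl (inr k) => inl (mate k)
  | inr j => if j \in J then inr j else inl (mate j)
  end.

Lemma lift_vertex_inj : injective lift_vertex.
Proof. by case=> [i|j] [i'|j'] //= [->]. Qed.

Lemma lift_vertexK : {in bverts I J, cancel lift_vertex retract_vertex}.
Proof. by case=> [i|j] //; rewrite mem_bvertsR /= => ->. Qed.

Lemma lift_vertex_bverts x : x \in bverts I J -> lift_vertex x \in bverts tau [set: 'I_d].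
Proof. by case: x => [i|j]; rewrite /= ?mem_bvertsL ?mem_bvertsR ?red_sigma_inl ?inE. Qed.

Lemma retract_vertex_bverts z : z \in bverts tau [set: 'I_d] -> retract_vertex z \in bverts I J.
Proof.
case: z => [[i|k]|j]; rewrite /= ?mem_bvertsL ?mem_bvertsR ?red_sigma_inl ?red_sigma_inr //.
  by rewrite inE; exact: mate_mem.
by case: ifP => jJ _; rewrite ?mem_bvertsL ?mem_bvertsR ?mate_mem ?jJ.
Qed.

Lemma badj_lift x y : badj core x y -> badj G (lift_vertex x) (lift_vertex y).
Proof. by case: x y => [i|j] [i'|j'] //=; rewrite inE => /andP[]. Qed.

Lemma badj_retract z w : badj G z w -> connect (badj core) (retract_vertex z) (retract_vertex w).
Proof.
have edge u v : (u, v) \in G ->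
    connect (badj core) (retract_vertex (inl u)) (retract_vertex (inr v)).
  case: u => [i|k] /= e; last by case/andP: (G_inr e) => /eqP-> /negbTE->.
  case: ifP => vJ; first by apply: connect1; rewrite /= inE e vJ.
  by move: e; rewrite G_notinJ ?vJ //= => /eqP[->].
have csym := sym_connect_sym (badj_sym core).
by case: z w => [u|v] [u'|v'] //= e; [apply: edge | rewrite csym; apply: edge].
Qed.

Lemma connect_lift_retract z : z \in bverts tau [set: 'I_d] ->
  connect (badj G) (lift_vertex (retract_vertex z)) z.
Proof.
have pendant k : k \notin J -> badj G (inl (inl (mate k))) (inr k).
  by move=> kJ /=; rewrite G_notinJ // eqxx orbT.
case: z => [[i|k]|j] /=; rewrite ?mem_bvertsL ?red_sigma_inr ?inE => zB; first exact: connect0.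
  apply: connect_trans (connect1 (pendant k zB)) (connect1 _) => /=.
  by rewrite G_notinJ // eqxx.
by case: ifP => jJ; [exact: connect0 | apply/connect1/pendant; rewrite jJ].
Qed.

Lemma core_graph_sub :
  (G \subset setX tau [set: 'I_d]) = (core \subset setX I J).
Proof.
apply/subsetP/subsetP => sub [x j].
  rewrite inE /= => /andP[e jJ]; have := sub _ e.
  by rewrite !in_setX /= red_sigma_inl jJ andbT => /andP[].
rewrite in_setX in_setT andbT /=; case: x => [i|k] e; last first.
  by case/andP: (G_inr e) => _; rewrite red_sigma_inr.
rewrite red_sigma_inl; case jJ: (j \in J).
  by have := sub (i, j); rewrite !inE e jJ => /(_ isT)/andP[].
by move: e; rewrite G_notinJ ?jJ //= => /eqP[->]; rewrite mate_mem ?jJ.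
Qed.

Lemma core_connected :
  (forall x y, x \in bverts tau [set: 'I_d] -> y \in bverts tau [set: 'I_d] ->
     connect (badj G) x y) <->
  (forall x y, x \in bverts I J -> y \in bverts I J -> connect (badj core) x y).
Proof.
split=> conn x y xB yB.
  rewrite -(lift_vertexK xB) -(lift_vertexK yB).
  exact: connect_map badj_retract _ _ (conn _ _ (lift_vertex_bverts xB) (lift_vertex_bverts yB)).
have csym := sym_connect_sym (badj_sym G).
apply: connect_trans (connect_trans _ (connect_lift_retract yB)).
  by rewrite csym; apply: connect_lift_retract.
apply: (connect_map (f := lift_vertex) (fun u v e => connect1 (badj_lift e))).
exact: conn (retract_vertex_bverts xB) (retract_vertex_bverts yB).
Qed.

Lemma cycle_lift_retract s z :
  cycle (badj G) s -> uniq s -> 2 < size s -> z \in s -> lift_vertex (retract_vertex z) = z.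
Proof.
move=> cs us ss.
have not_inr k : inl (inr k) \notin s.
  apply/negP => /(uniq_cycle_nbrs cs us ss)[[y|y] [[w|w] [_ _ yw /= eky ewk]]] //.
  case/andP: (G_inr eky) => /eqP eyk _; case/andP: (G_inr ewk) => /eqP ewk' _.
  by rewrite eyk ewk' eqxx in yw.
case: z => [[i|k]|j] zs //=; first by rewrite (negbTE (not_inr k)) in zs.
case: ifP => // jJ.
have [[y|y] [[w|w] [ys ws yw /= ejy ewj]]] := uniq_cycle_nbrs cs us ss zs => //.
move: ejy ewj; rewrite !G_notinJ ?jJ // => /orP[/eqP Ey|/eqP Ey] /orP[/eqP Ew|/eqP Ew].
- by move: ys; rewrite Ey (negbTE (not_inr j)).
- by move: ys; rewrite Ey (negbTE (not_inr j)).
- by move: ws; rewrite Ew (negbTE (not_inr j)).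
- by rewrite Ey Ew eqxx in yw.
Qed.

Lemma core_acyclic : bacyclic G <-> bacyclic core.
Proof.
split=> acy [s /and3P[ss us cs]]; apply: acy.
  exists (map lift_vertex s); rewrite size_map ss (map_inj_uniq lift_vertex_inj) us /=.
  exact: homo_cycle badj_lift _ cs.
have fixed := cycle_lift_retract cs us ss.
have Es : map lift_vertex (map retract_vertex s) = s.
  by rewrite -map_comp -[RHS]map_id; apply/eq_in_map => z /fixed.
exists (map retract_vertex s); rewrite size_map ss -(map_inj_uniq lift_vertex_inj) Es us /=.
apply: (homo_cycle_in (P := [pred z | lift_vertex (retract_vertex z) == z])) cs; last first.
  by apply/allP => z /fixed /eqP.
move=> [[i|k]|j] [[i'|k']|j'] //; rewrite !inE /=.
  by case: ifP => [jJ _ _ e | _ _ /eqP //]; rewrite inE /= e jJ.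
by case: ifP => [jJ _ _ e | _ /eqP //]; rewrite /= inE /= e jJ.
Qed.

Lemma core_right_deg2 : right_deg2 [set: 'I_d] G <-> right_deg2 J core.
Proof.
have nbr_inJ j : j \in J -> [set a | (a, j) \in G] = inl @: [set i | (i, j) \in core].
  move=> jJ; apply/setP => -[i|k]; rewrite inE.
    by rewrite mem_imset ?inE /= ?jJ ?andbT //; apply: inl_inj.
  apply/idP/imsetP => [/G_inr/andP[/eqP ejk kJ] | [] //].
  by rewrite -ejk jJ in kJ.
split=> deg j jJ.
  by rewrite -(deg j (in_setT j)) nbr_inJ // card_imset //; apply: inl_inj.
case: (boolP (j \in J)) => [jJ' | jJ'].
  by rewrite nbr_inJ // card_imset; [exact: deg | apply: inl_inj].
have -> : [set a | (a, j) \in G] = [set inr j; inl (mate j)].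
  by apply/setP => x; rewrite !inE G_notinJ.
exact: cards2.
Qed.

Lemma core_spanning_tree : is_spanning_tree tau [set: 'I_d] G <-> is_spanning_tree I J core.
Proof.
rewrite /is_spanning_tree core_graph_sub core_acyclic.
by split=> -[sub [conn acy]]; split=> //; split=> //; apply/core_connected.
Qed.

End PendantPaths.

Definition link_graph n d (M : mfield n d) (tau : {set gset n d}) : {set gset n d * 'I_d} :=
  \bigcup_(s : {set gset n d} | (s \subset tau) && (#|s| == d)) fget M s.

Definition left_link_graph n d (S : mstack n d) (I : {set 'I_n}) (J : {set 'I_d}) :
    {set 'I_n * 'I_d} :=
  \bigcup_(I' : {set 'I_n} | (I' \subset I) && (#|I'| == #|J|)) sget S I' J.



Lemma sget_sub_left_link n d (S : mstack n d) (I : {set 'I_n}) (J : {set 'I_d}) i :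
  #|I| = #|J| + 1 -> i \in I -> sget S (I :\ i) J \subset left_link_graph S I J.
Proof.
move=> cIJ iI; apply: (bigcup_sup (I :\ i)).
by rewrite subD1set (card_setD1_eq iI (etrans cIJ (addn1 _))) /=.
Qed.

Section LinkGraph.
Variables (n d : nat) (hn : 0 < n) (M : mfield n d).
Hypothesis pM : is_pointed_mf M.
Variables (I : {set 'I_n}) (J : {set 'I_d}).
Hypothesis cIJ : #|I| = #|J| + 1.

Local Notation tau := (red_sigma I J).
Local Notation G := (link_graph M tau).

Lemma card_tau : #|tau| = d.+1.
Proof. by rewrite (card_red_sigma_eq cIJ) addn1. Qed.

Lemma card_tau_setD1 x : x \in tau -> #|tau :\ x| = d.
Proof. by move=> xtau; apply: card_setD1_eq xtau card_tau. Qed.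

Lemma mem_link_graph e : reflect (exists2 x, x \in tau & e \in fget M (tau :\ x)) (e \in G).
Proof.
apply: (iffP bigcupP) => [[s /andP[stau /eqP cs] es] | [x xtau ex]].
  by have [x xtau def_s] := subset_card_setD1 stau card_tau cs; exists x; rewrite -?def_s.
by exists (tau :\ x); rewrite ?subD1set ?card_tau_setD1 ?eqxx.
Qed.

Lemma card_I_setD1 i : i \in I -> #|I :\ i| = #|J|.
Proof. by move=> iI; apply: card_setD1_eq iI _; rewrite cIJ addn1. Qed.

Lemma card_J_setU1 k : k \notin J -> #|I| = #|k |: J|.
Proof. by move=> kJ; rewrite cardsU1 kJ cIJ addn1. Qed.

Lemma I_neq0 : exists i, i \in I.
Proof. by apply/card_gt0P; rewrite cIJ addn1. Qed.

Definition pendant_mate k := odflt (Ordinal hn) [pick i | (inl i, k) \in fget M (tau :\ inr k)].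

Lemma pendant_mateP k : k \notin J -> (inl (pendant_mate k), k) \in fget M (tau :\ inr k).
Proof.
move=> kJ; have cs : #|tau :\ inr k| = d by rewrite card_tau_setD1 ?red_sigma_inr.
have [[i|k'] e] := pmatching_exR (fget_pmatching pM cs) (in_setT k).
  by rewrite /pendant_mate; case: pickP => [//|none]; rewrite none in e.
move: e; rewrite fget_inrE // in_setD1 => /andP[/andP[k'k _] /eqP ekk'].
by rewrite ekk' eqxx in k'k.
Qed.

Lemma pendant_mate_mem k : k \notin J -> pendant_mate k \in I.
Proof.
move=> kJ; have cs : #|tau :\ inr k| = d by rewrite card_tau_setD1 ?red_sigma_inr.
have /andP[] := pmatching_mem (fget_pmatching pM cs) (pendant_mateP kJ).
by rewrite in_setD1 red_sigma_inl.
Qed.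

Lemma link_graph_notinJ k : k \notin J ->
  forall x, ((x, k) \in G) = (x == inr k) || (x == inl (pendant_mate k)).
Proof.
move=> kJ x; have ktau : inr k \in tau by rewrite red_sigma_inr.
apply/mem_link_graph/orP => [[y ytau e] | [/eqP-> | /eqP->]].
- have cs := card_tau_setD1 ytau; have pm := fget_pmatching pM cs.
  case: (eqVneq y (inr k)) cs pm e => [-> | yk] cs pm e.
    by right; apply/eqP; exact: pmatching_uniqR pm e (pendant_mateP kJ).
  left; apply/eqP; apply: (pmatching_uniqR pm e).
  by rewrite fget_inrE // eqxx andbT in_setD1 eq_sym yk.
- have [i iI] := I_neq0; exists (inl i); first by rewrite red_sigma_inl.
  by rewrite fget_inrE ?card_tau_setD1 ?red_sigma_inl // in_setD1 ktau eqxx.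
- by exists (inr k); last exact: pendant_mateP.
Qed.

Lemma link_graph_inr k j : (inr k, j) \in G -> (j == k) && (k \notin J).
Proof.
case/mem_link_graph => x xtau; rewrite fget_inrE ?card_tau_setD1 //.
by rewrite in_setD1 red_sigma_inr => /andP[/andP[_ ->] ->].
Qed.

Local Notation core := (core_graph J G).
Local Notation left_link := (left_link_graph (reduction M) I J).

Lemma linkage_at_tau :
  is_spanning_tree tau [set: 'I_d] G /\ right_deg2 [set: 'I_d] G <->
  is_spanning_tree I J core /\ right_deg2 J core.
Proof.
have tree := core_spanning_tree link_graph_notinJ pendant_mate_mem link_graph_inr.
have deg := core_right_deg2 link_graph_notinJ link_graph_inr.
by rewrite tree deg.
Qed.

Lemma left_link_sub_core : left_link \subset core.
Proof.
apply/subsetP => -[i j] /bigcupP[I' /andP[I'I /eqP cI'] e].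
have [x xI def_I'] := subset_card_setD1 I'I (etrans cIJ (addn1 _)) cI'.
have /andP[_ jJ] := pmatching_mem (reduction_pmatching pM cI') e.
rewrite inE /= jJ andbT; apply/mem_link_graph; exists (inl x); first by rewrite red_sigma_inl.
by rewrite red_sigma_setD1_inl // -def_I' -sget_reductionE.
Qed.

Lemma mem_core i j : (i, j) \in core ->
  (exists2 x, x \in I & (i, j) \in sget (reduction M) (I :\ x) J) \/
  (exists2 k, k \notin J & (i, j) \in sget (reduction M) I (k |: J)).
Proof.
rewrite inE /= => /andP[/mem_link_graph[[x|k] xtau e] jJ].
  rewrite red_sigma_inl in xtau; left; exists x => //.
  by rewrite sget_reductionE ?card_I_setD1 // -red_sigma_setD1_inl.
rewrite red_sigma_inr in xtau; right; exists k => //.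
by rewrite sget_reductionE -?card_J_setU1 // -red_sigma_setD1_inr.
Qed.

Lemma left_link_two_nbrs j : j \in J ->
  exists a b, [/\ a != b, (a, j) \in left_link & (b, j) \in left_link].
Proof.
move=> jJ; have [x xI] := I_neq0.
have pmx := reduction_pmatching pM (card_I_setD1 xI); have [a ea] := pmatching_exR pmx jJ.
have /andP[/setD1P[ax aI] _] := pmatching_mem pmx ea.
have pma := reduction_pmatching pM (card_I_setD1 aI); have [b eb] := pmatching_exR pma jJ.
have /andP[/setD1P[ba _] _] := pmatching_mem pma eb.
exists a, b; split; first by rewrite eq_sym.
  exact: subsetP (sget_sub_left_link _ cIJ xI) _ ea.
exact: subsetP (sget_sub_left_link _ cIJ aI) _ eb.
Qed.

Lemma core_eq_left_link_of_deg2 : right_deg2 J core -> core = left_link.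
Proof.
move=> deg2; apply/eqP; rewrite eqEsubset left_link_sub_core andbT.
apply/subsetP => -[i j] e; have /andP[_ jJ] : ((inl i, j) \in G) && (j \in J) by rewrite inE in e.
have [a [b [ab ea eb]]] := left_link_two_nbrs jJ.
have nbrs_j : [set a; b] = [set a' | (a', j) \in core].
  apply/eqP; rewrite eqEcard cards2 ab deg2 // andbT.
  by apply/subsetP => y /set2P[]->; rewrite in_set; apply: (subsetP left_link_sub_core).
by move/setP/(_ i): nbrs_j; rewrite in_set2 in_set e => /orP[]/eqP->.
Qed.

Lemma core_eq_left_link_of_closure : closure_ax (reduction M) -> core = left_link.
Proof.
move=> clos; apply/eqP; rewrite eqEsubset left_link_sub_core andbT.
apply/subsetP => -[i j] e; have /andP[_ jJ] : ((inl i, j) \in G) && (j \in J) by rewrite inE in e.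
case: (mem_core e) => [[x xI e'] | [k kJ e']].
  exact: subsetP (sget_sub_left_link _ cIJ xI) _ e'.
(* If [c] is the partner of [k] at [(I, k |: J)], closure puts the matching at
   [(I :\ c, J)] inside that one, so it contains the edge at [i]. *)
have cK := card_J_setU1 kJ; have pmK := reduction_pmatching pM cK.
have [c ec] := pmatching_exR pmK (setU11 k J); have /andP[cI _] := pmatching_mem pmK ec.
have sub : sget (reduction M) (I :\ c) J \subset sget (reduction M) I (k |: J).
  apply: clos => //; [exact: subD1set | exact: subsetUr |].
  exists (sget (reduction M) I (k |: J) :\ (c, k)); split; first exact: subD1set.
  by have := pmatching_setD1 pmK ec; rewrite setU1K.
have ic : i != c.
  by apply: contraNneq kJ => eic; rewrite eic in e'; rewrite -(pmatching_uniqL pmK e' ec).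
have pmc := reduction_pmatching pM (card_I_setD1 cI).
have /andP[iI _] := pmatching_mem pmK e'.
have [j' ej'] : exists j', (i, j') \in sget (reduction M) (I :\ c) J.
  by apply: pmatching_exL pmc _; rewrite in_setD1 ic.
rewrite -(pmatching_uniqL pmK (subsetP sub _ ej') e').
exact: subsetP (sget_sub_left_link _ cIJ cI) _ ej'.
Qed.

End LinkGraph.



(** * Linkage versus left semi-ensembles *)

Lemma closure_by_deletion n d (S : mstack n d) : is_mstack S ->
  (forall (I : {set 'I_n}) (J : {set 'I_d}) i j, #|I| = #|J| -> (i, j) \in sget S I J ->
     sget S (I :\ i) (J :\ j) \subset sget S I J) ->
  closure_ax S.
Proof.
move=> mS step I I' J J' cIJ I'I J'J [E [ES pmE]].
have [m le_m] : exists m, #|I :\: I'| <= m by exists #|I :\: I'|.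
elim: m I J le_m cIJ I'I J'J ES => [|m IHm] I J le_m cIJ I'I J'J ES.
  suff II' : I \subset I'.
    by have [<- <-] := pmatching_sub_eq (sget_pmatching mS cIJ) pmE ES II' J'J.
  by rewrite -setD_eq0 -cards_eq0 -leqn0.
case: (boolP (I \subset I')) => [II' | /subsetPn[i iI iI']].
  by have [<- <-] := pmatching_sub_eq (sget_pmatching mS cIJ) pmE ES II' J'J.
have pmI := sget_pmatching mS cIJ; have [j eij] := pmatching_exL pmI iI.
have /andP[_ jJ] := pmatching_mem pmI eij.
have jJ' : j \notin J'.
  apply: contra iI' => jJ'; have [i' ei'j] := pmatching_exR pmE jJ'.
  by rewrite (pmatching_uniqR pmI eij (subsetP ES _ ei'j)); case/andP: (pmatching_mem pmE ei'j).
have cIJi : #|I :\ i| = #|J :\ j|.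
  by move: cIJ; rewrite (cardsD1 i I) (cardsD1 j J) iI jJ !add1n => -[].
apply: subset_trans (step _ _ _ _ cIJ eij); apply: IHm => //.
- move: le_m; rewrite setDDl setUC -setDDl (cardsD1 i (I :\: I')) !inE iI iI'.
  by rewrite add1n ltnS.
- apply/subsetP => x xI'; rewrite in_setD1 (subsetP I'I _ xI') andbT.
  by apply: contraNneq iI' => <-.
- apply/subsetP => y yJ'; rewrite in_setD1 (subsetP J'J _ yJ') andbT.
  by apply: contraNneq jJ' => <-.
apply: pmatching_sub_restrict pmI (sget_pmatching mS cIJi) (step _ _ _ _ cIJ eij) ES _.
move=> a b eab; have /andP[aI' _] := pmatching_mem pmE eab.
by rewrite in_setD1 (subsetP I'I _ aI') andbT; apply: contraNneq iI' => <-.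
Qed.

Section Reduction.
Variables (n d : nat) (hn : 0 < n) (M : mfield n d).
Hypothesis pM : is_pointed_mf M.
Implicit Types (I : {set 'I_n}) (J : {set 'I_d}).

Lemma linkage_core I J : is_linkage M -> #|I| = #|J| + 1 ->
  let G := core_graph J (link_graph M (red_sigma I J)) in
  [/\ is_spanning_tree I J G, right_deg2 J G & G = left_link_graph (reduction M) I J].
Proof.
move=> L cIJ; have [tree deg] := (linkage_at_tau hn pM cIJ).1 (L _ (card_tau cIJ)).
by split=> //; apply: core_eq_left_link_of_deg2.
Qed.

Lemma reduction_closure : is_linkage M -> closure_ax (reduction M).
Proof.
move=> L; apply: closure_by_deletion (reduction_mstack pM) _ => I J i j cIJ e.
have pm := reduction_pmatching pM cIJ; have /andP[iI jJ] := pmatching_mem pm e.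
have cIJj : #|I| = #|J :\ j| + 1 by rewrite addn1 cIJ (cardsD1 j J) jJ add1n.
have [[_ [_ acyclic]] _ core_eq] := linkage_core L cIJj.
(* Both [sget (I :\ i) (J :\ j)] and [sget I J :\ (i, j)] are perfect matchings of
   [(I :\ i, J :\ j)] inside the tree at [(I, J :\ j)], hence they coincide. *)
have sub_del : sget (reduction M) (I :\ i) (J :\ j) \subset
               core_graph (J :\ j) (link_graph M (red_sigma I (J :\ j))).
  by rewrite core_eq; apply: sget_sub_left_link.
have sub_rest : sget (reduction M) I J :\ (i, j) \subset
                core_graph (J :\ j) (link_graph M (red_sigma I (J :\ j))).
  apply/subsetP => -[a b] eab; have /andP[_ bJ] := pmatching_mem (pmatching_setD1 pm e) eab.
  rewrite inE /= bJ andbT; apply/(mem_link_graph _ cIJj); exists (inr j).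
    by rewrite red_sigma_inr !inE eqxx.
  rewrite red_sigma_setD1_inr ?inE ?eqxx // setD1K // -sget_reductionE //.
  by case/setD1P: eab.
have pm_del := reduction_pmatching pM (card_I_setD1 cIJj iI).
rewrite (acyclic_pmatching_uniq acyclic sub_del sub_rest pm_del (pmatching_setD1 pm e)).
exact: subD1set.
Qed.

Lemma reduction_ensemble_of_linkage : is_linkage M -> is_left_semi_ensemble (reduction M).
Proof.
move=> L; split; first exact: reduction_mstack.
split; first exact: reduction_closure.
move=> I J cIJ /=; rewrite -/(left_link_graph (reduction M) I J).
by have [tree deg <-] := linkage_core L cIJ.
Qed.

Lemma linkage_of_reduction_ensemble : is_left_semi_ensemble (reduction M) -> is_linkage M.
Proof.
move=> [_ [clos left_link]] tau; rewrite -addn1 => /card_idx cIJ.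
rewrite -(red_sigmaK tau).
rewrite /= -/(link_graph M _); apply/(linkage_at_tau hn pM cIJ).
by rewrite core_eq_left_link_of_closure //; apply: left_link.
Qed.

Lemma fget_inl_reduction (s : {set gset n d}) i j : #|s| = d ->
  ((inl i, j) \in fget M s) = ((i, j) \in sget (reduction M) (idxI s) (idxJ s)).
Proof.
by move=> cs; rewrite sget_reductionE ?red_sigmaK // (card_idx (m := 0)) ?addn0.
Qed.

End Reduction.

Lemma reduction_inj n d (M1 M2 : mfield n d) : is_pointed_mf M1 -> is_pointed_mf M2 ->
  reduction M1 = reduction M2 -> M1 = M2.
Proof.
move=> pM1 pM2 eq_red; apply/ffunP => -[s cs]; rewrite -!fgetE.
have cs' : #|s| = d by apply/eqP.
by apply/setP => -[[i|k] j]; rewrite ?fget_inl_reduction ?fget_inrE ?eq_red.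
Qed.

Definition field_of_stack n d (S : mstack n d) : mfield n d :=
  [ffun k : fidx n d => [set e : gset n d * 'I_d |
     match e.1 with
     | inl i => (i, e.2) \in sget S (idxI (val k)) (idxJ (val k))
     | inr k' => (inr k' \in val k) && (e.2 == k')
     end]].

Section FieldOfStack.
Variables (n d : nat) (S : mstack n d).
Hypothesis mS : is_mstack S.

Lemma fget_field_of_stack (s : {set gset n d}) x j : #|s| = d ->
  ((x, j) \in fget (field_of_stack S) s) =
  match x with
  | inl i => (i, j) \in sget S (idxI s) (idxJ s)
  | inr k => (inr k \in s) && (j == k)
  end.
Proof. by move=> /eqP cs; rewrite (fgetE _ cs) ffunE inE. Qed.

Lemma field_of_stack_pointed : is_pointed_mf (field_of_stack S).
Proof.
move=> [s /= cs]; rewrite -(fgetE _ cs); have {}cs : #|s| = d by apply/eqP.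
have cIJ : #|idxI s| = #|idxJ s| by rewrite (card_idx (m := 0)) ?addn0.
have pm := sget_pmatching mS cIJ; have [_ [degL degR]] := pm.
split=> [|k ks]; last by rewrite fget_field_of_stack // ks eqxx.
split; [|split].
- apply/subsetP => -[[i|k] j]; rewrite in_setX in_setT andbT fget_field_of_stack //.
    by case/(pmatching_mem pm)/andP; rewrite inE.
  by case/andP.
- case=> [i|k] xs.
    rewrite -(degL i) ?inE //; apply: eq_card => j.
    by rewrite !inE fget_field_of_stack.
  suff -> : [set j | (inr k, j) \in fget (field_of_stack S) s] = [set k] by apply: cards1.
  by apply/setP => j; rewrite !inE fget_field_of_stack // xs.
- move=> b _; case: (boolP (inr b \in s)) => bs.
    suff -> : [set x | (x, b) \in fget (field_of_stack S) s] = [set inr b] by apply: cards1.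
    apply/setP => -[i|k]; rewrite !inE fget_field_of_stack //.
      apply/negbTE; apply: contraL bs => /(pmatching_mem pm)/andP[_].
      by rewrite inE.
    by apply/andP/eqP => [[_ /eqP->] | [->]] //; rewrite bs eqxx.
  have bJ : b \in idxJ s by rewrite inE.
  rewrite -(degR b bJ) -[RHS](card_imset _ (@inl_inj 'I_n 'I_d)); apply: eq_card => -[i|k].
    by rewrite inE (mem_imset _ _ (@inl_inj _ 'I_d)) inE fget_field_of_stack.
  rewrite !inE fget_field_of_stack //; apply/andP/imsetP => [[ks /eqP bk] | [] //].
  by rewrite bk ks in bs.
Qed.

Lemma reduction_field_of_stack : reduction (field_of_stack S) = S.
Proof.
apply/ffunP => -[[I J] /= cIJ]; rewrite ffunE /=.
have cs : #|red_sigma I J| = d by rewrite (card_red_sigma_eq (m := 0)) ?addn0 ?(eqP cIJ).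
apply/setP => -[i j]; rewrite inE fget_field_of_stack //.
by rewrite idxI_red_sigma idxJ_red_sigma (sgetE _ cIJ).
Qed.

End FieldOfStack.

Theorem mainTheorem4 (n d : nat) (hn : 0 < n) (hd : 0 < d) :
  (forall M : mfield n d, is_pointed_mf M ->
     (is_linkage M <-> is_left_semi_ensemble (reduction M))) /\
  (forall M1 M2 : mfield n d, is_pointed_mf M1 -> is_pointed_mf M2 ->
     is_linkage M1 -> is_linkage M2 -> reduction M1 = reduction M2 -> M1 = M2) /\
  (forall S : mstack n d, is_left_semi_ensemble S ->
     exists M : mfield n d, [/\ is_pointed_mf M, is_linkage M & reduction M = S]).
Proof.
split; [|split].
- move=> M pM; split; first exact: reduction_ensemble_of_linkage.
  exact: linkage_of_reduction_ensemble.
- by move=> M1 M2 pM1 pM2 _ _; apply: reduction_inj.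
move=> S ensS; have pM := field_of_stack_pointed ensS.1.
exists (field_of_stack S); split=> //; last exact: reduction_field_of_stack.
by apply: linkage_of_reduction_ensemble hn _ pM _; rewrite reduction_field_of_stack.
Qed.
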